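(* Let $f:\mathbb{R}^d\to\mathbb{R}$ be convex and $L$-smooth and let $\gamma>0$. Consider the iterates $z_0=x_0\in\mathbb{R}^d$ and, for $k\ge0$, $$y_k=(1-c_{k+1})x_k+c_{k+1}z_k,\qquad z_{k+1}=z_k-\rho_k\nabla f(y_k),\qquad x_{k+1}=(1-c_{k+1})x_k+c_{k+1}z_{k+1},$$ with $c_{k+1}=\frac{2}{k+2}$ and $\rho_k=\frac{k+1}{\gamma L}$. Then for every $k\ge0$, $$-f(y_k)\le -f(x_{k+1})-2L\left(\frac{\gamma}{(k+1)^{\overline{2}}}-\frac{1}{(k+2)^2}\right)\|z_{k+1}-z_k\|^2,$$ where $(k+1)^{\overline 2}=(k+1)(k+2)$.
   Context: $L$-smooth means $f$ is differentiable and $\|\nabla f(x)-\nabla f(y)\|\le L\|x-y\|$ for all $x,y$. *)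

From HB Require Import structures.
From mathcomp Require Import all_boot all_order all_algebra.
From mathcomp Require Import all_classical all_reals all_analysis.
Set Implicit Arguments. Unset Strict Implicit. Unset Printing Implicit Defensive.
Import Order.TTheory GRing.Theory Num.Theory.
Import numFieldNormedType.Exports.
Local Open Scope ring_scope.

Section Defs.
Variables (R : realType) (d : nat).

Definition dotv (u v : 'rV[R]_d) : R := \sum_(i < d) u ord0 i * v ord0 i.
Definition enorm (u : 'rV[R]_d) : R := Num.sqrt (dotv u u).

(* Gradient: the vector of partial derivatives, i.e. the coordinates of the
   Frechet differential 'd f x in the standard basis. *)
Definition grad (f : 'rV[R]_d -> R) (x : 'rV[R]_d) : 'rV[R]_d :=
  \row_(i < d) ('d f x) (delta_mx 0 i).

Definition convex_fun (f : 'rV[R]_d -> R) : Prop :=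
  forall (x y : 'rV[R]_d) (t : R), 0 <= t -> t <= 1 ->
    f ((1 - t) *: x + t *: y) <= (1 - t) * f x + t * f y.

Definition L_smooth (L : R) (f : 'rV[R]_d -> R) : Prop :=
  (forall x, differentiable f x) /\
  forall x y, enorm (grad f x - grad f y) <= L * enorm (x - y).

Definition cc (k : nat) : R := 2 / (k%:R + 2).       (* c_{k+1} = 2/(k+2) *)
Definition rho (gamma L : R) (k : nat) : R := (k%:R + 1) / (gamma * L).

Fixpoint xz (f : 'rV[R]_d -> R) (gamma L : R) (x0 : 'rV[R]_d) (k : nat)
  : 'rV[R]_d * 'rV[R]_d :=
  match k with
  | 0%N => (x0, x0)
  | k'.+1 =>
      let xk := (xz f gamma L x0 k').1 in
      let zk := (xz f gamma L x0 k').2 in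
      let yk := (1 - cc k') *: xk + cc k' *: zk in
      let zk1 := zk - rho gamma L k' *: grad f yk in
      ((1 - cc k') *: xk + cc k' *: zk1, zk1)
  end.

Definition xs f gamma L x0 k := (xz f gamma L x0 k).1.
Definition zs f gamma L x0 k := (xz f gamma L x0 k).2.
Definition ys f gamma L x0 k :=
  (1 - cc k) *: xs f gamma L x0 k + cc k *: zs f gamma L x0 k.

End Defs.

(* Since z_{k+1} - z_k = -rho_k grad f(y_k), the point
   x_{k+1} = y_k - c_{k+1} rho_k grad f(y_k) is a gradient step from y_k with
   step s = c_{k+1} rho_k.  The descent lemma for L-smooth functions,
   f(y - s grad f(y)) <= f(y) - s (1 - L s / 2) |grad f(y)|^2, proves the claim,
   because s (1 - L s / 2) = 2L (gamma / ((k+1)(k+2)) - 1 / (k+2)^2) rho_k^2.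
   The descent lemma follows from the monotonicity of
   t |-> f(x + t v) - t <grad f(x), v> - L t^2 |v|^2 / 2 on [0, 1], whose
   derivative <grad f(x + t v) - grad f(x), v> - L t |v|^2 is nonpositive by
   the Lipschitz bound on the gradient and Cauchy-Schwarz. *)

From mathcomp Require Import all_boot all_order all_algebra.
From mathcomp Require Import all_classical all_reals all_analysis.
From mathcomp Require Import ring lra.
Set Implicit Arguments.
Unset Strict Implicit.
Unset Printing Implicit Defensive.
Import Order.TTheory GRing.Theory Num.Theory.
Import numFieldNormedType.Exports.
Local Open Scope ring_scope.

Section Euclidean.
Variables (R : realType) (d : nat).
Implicit Types (u v w : 'rV[R]_d) (a : R).

Lemma dotvC u v : dotv u v = dotv v u.
Proof. by apply: eq_bigr => i _; rewrite mulrC. Qed.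

Lemma dotvDl u v w : dotv (u + v) w = dotv u w + dotv v w.
Proof. by rewrite /dotv -big_split; apply: eq_bigr => i _; rewrite !mxE mulrDl. Qed.

Lemma dotvZl a u v : dotv (a *: u) v = a * dotv u v.
Proof. by rewrite /dotv mulr_sumr; apply: eq_bigr => i _; rewrite !mxE mulrA. Qed.

Lemma dotvBl u v w : dotv (u - v) w = dotv u w - dotv v w.
Proof. by rewrite dotvDl -scaleN1r dotvZl mulN1r. Qed.

Lemma dotvZr a u v : dotv u (a *: v) = a * dotv u v.
Proof. by rewrite dotvC dotvZl dotvC. Qed.

Lemma dotvBr u v w : dotv u (v - w) = dotv u v - dotv u w.
Proof. by rewrite dotvC dotvBl !(dotvC u). Qed.

Lemma dotvv_ge0 u : 0 <= dotv u u.
Proof. by apply: sumr_ge0 => i _; rewrite -expr2 sqr_ge0. Qed.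

Lemma enorm_ge0 u : 0 <= enorm u.
Proof. exact: sqrtr_ge0. Qed.

Lemma enorm_sqr u : enorm u ^+ 2 = dotv u u.
Proof. by rewrite sqr_sqrtr // dotvv_ge0. Qed.

Lemma enormZ a u : enorm (a *: u) = `|a| * enorm u.
Proof.
by rewrite /enorm dotvZl dotvZr mulrA -expr2 sqrtrM ?sqr_ge0 // sqrtr_sqr.
Qed.

Lemma enormN u : enorm (- u) = enorm u.
Proof. by rewrite -scaleN1r enormZ normrN1 mul1r. Qed.

Lemma dotv_young a u v : 2 * a * dotv u v <= dotv u u + a ^+ 2 * dotv v v.
Proof.
have := dotvv_ge0 (u - a *: v).
rewrite dotvBl !dotvBr !dotvZl !dotvZr (dotvC v u); lra.
Qed.

Lemma dotv_le_of_enorm_le a u v : 0 < a -> enorm u <= a * enorm v ->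
  dotv u v <= a * dotv v v.
Proof.
move=> a_gt0 uv.
have uu : dotv u u <= a ^+ 2 * dotv v v.
  rewrite -!enorm_sqr -exprMn; have := enorm_ge0 u; nra.
have := dotv_young a u v; nra.
Qed.

End Euclidean.

Section Smooth.
Variables (R : realType) (d : nat).
Implicit Types (x v : 'rV[R]_d) (f : 'rV[R]_d -> R).

Lemma diff_gradE f x v : 'd f x v = dotv (grad f x) v.
Proof.
rewrite {1}(row_sum_delta v) linear_sum /dotv; apply: eq_bigr => i _.
by rewrite linearZ /= mxE mulrC.
Qed.

Lemma is_derive_line f x v t : differentiable f (x + t *: v) ->
  is_derive t (1 : R) (fun s => f (x + s *: v)) (dotv (grad f (x + t *: v)) v).
Proof.
move=> df.
have dl : is_diff t (fun s : R => x + s *: v) ( *:%R ^~ v).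
  by apply: is_diff_eq; rewrite add0r.
have dcomp := is_diff_comp dl (differentiableP df).
apply: DeriveDef; first exact: diff_derivable.
by rewrite deriveE // diff_val /= scale1r diff_gradE.
Qed.

Lemma L_smooth_descent f L x v : 0 < L -> L_smooth L f ->
  f (x + v) <= f x + dotv (grad f x) v + L / 2 * dotv v v.
Proof.
move=> L_gt0 [f_diff grad_lip].
set A := dotv (grad f x) v; set B := dotv v v.
pose phi t := f (x + t *: v) - A * t - L / 2 * B * t ^+ 2.
have phi_derive t : is_derive t (1 : R) phi
    (dotv (grad f (x + t *: v)) v - A - L * t * B).
  have line_derive := is_derive_line (f_diff (x + t *: v)).
  apply: is_derive_eq.
  rewrite [A%:A]mulr1 [t%:A]mulr1 -[(L / 2 * B) *: _]/(L / 2 * B * _).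
  by congr (_ - _); field.
have phi_derive_le0 t : 0 < t ->
    dotv (grad f (x + t *: v)) v - A - L * t * B <= 0.
  move=> t_gt0; rewrite subr_le0 /A -dotvBl.
  apply: dotv_le_of_enorm_le; first exact: mulr_gt0.
  apply: le_trans (grad_lip _ _) _.
  by rewrite (addrC x) addrK enormZ gtr0_norm // mulrA.
have phi_derivable t : derivable phi t 1 by have [] := phi_derive t.
have phi_nonincr : {in `[0, 1] &, {homo phi : s t /~ s <= t}}.
  apply: ler0_derive1_le_cc => [t _ | t | ]; first exact: phi_derivable.
    by rewrite in_itv /= derive1E => /andP[t_gt0 _]; rewrite derive_val phi_derive_le0.
  exact: derivable_within_continuous.
have := phi_nonincr 1 0; rewrite !in_itv /= !lexx ler01 => /(_ isT isT isT).
rewrite /phi scale0r scale1r addr0 expr0n expr1n /=; lra.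
Qed.

Lemma gradient_step_descent f L y s : 0 < L -> L_smooth L f ->
  f (y - s *: grad f y) <= f y - s * (1 - L * s / 2) * enorm (grad f y) ^+ 2.
Proof.
move=> L_gt0 f_smooth; rewrite -scaleNr.
have := L_smooth_descent y ((- s) *: grad f y) L_gt0 f_smooth.
rewrite dotvZl !dotvZr enorm_sqr; lra.
Qed.

End Smooth.

Theorem lemma22 (R : realType) (d : nat) (f : 'rV[R]_d -> R) (L gamma : R)
  (x0 : 'rV[R]_d) :
  0 < L -> convex_fun f -> L_smooth L f -> 0 < gamma ->
  forall k : nat,
    - f (ys f gamma L x0 k) <=
      - f (xs f gamma L x0 k.+1)
      - 2 * L * (gamma / ((k%:R + 1) * (k%:R + 2)) - 1 / (k%:R + 2) ^+ 2)
          * enorm (zs f gamma L x0 k.+1 - zs f gamma L x0 k) ^+ 2.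
Proof.
move=> L_gt0 _ f_smooth gamma_gt0 k.
set c := cc R k; set r := rho gamma L k.
set y := ys f gamma L x0 k; set z := zs f gamma L x0 k; set g := grad f y.
have x_step : xs f gamma L x0 k.+1 = y - (c * r) *: g.
  by rewrite /xs /= scalerBr scalerA addrA.
have z_step : zs f gamma L x0 k.+1 - z = - (r *: g).
  by rewrite /zs /= addrAC subrr add0r.
have coef : 2 * L * (gamma / ((k%:R + 1) * (k%:R + 2)) - 1 / (k%:R + 2) ^+ 2) * r ^+ 2
    = c * r * (1 - L * (c * r) / 2).
  by rewrite /c /r /cc /rho; field; rewrite !gt_eqF ?ltr_wpDl.
rewrite x_step z_step enormN enormZ exprMn real_normK ?num_real //.
rewrite [_ * (r ^+ 2 * _)]mulrA coef.
have := gradient_step_descent y (c * r) L_gt0 f_smooth; lra.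
Qed.
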